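(* Assume (A1)–(A4). Then there exist $q>0$, $K>0$, $\delta>0$ and $b>0$ such that, with $V(x)=W(x)=1+qx^2$ and $C=[-K,K]$, $$\log\big(e^{-V}Pe^{V}\big)(x)\le-\delta W(x)+b\mathbf{1}_C(x)\quad\text{for all }x\in\mathbb{R},$$ where $Pe^V(x)=\mathbb{E}\,e^{V(x+\mu(x)+\sigma(x)\varepsilon_1)}$.
   Context: $\mu,\sigma:\mathbb{R}\to\mathbb{R}$ measurable, $(\varepsilon_t)$ i.i.d. Assumptions: (A1) $\varepsilon_1$ has a density w.r.t. Lebesgue measure, bounded and bounded away from $0$ on compacts; (A2) $\mu$ locally bounded, $\sigma$ positive, bounded away from $0$ on compacts, globally bounded; (A3) $\limsup_{|x|\to\infty}|x+\mu(x)|/|x|<1$; (A4) $\mathbb{E}e^{\kappa\varepsilon_1^2}<\infty$ for some $\kappa>0$ and $\mathbb{E}\varepsilon_1=0$. $P(x,A)=\mathbb{P}(x+\mu(x)+\sigma(x)\varepsilon_1\in A)$ is the transition kernel of the chain $X_t=X_{t-1}+\mu(X_{t-1})+\sigma(X_{t-1})\varepsilon_t$. *)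

From HB Require Import structures.
From mathcomp Require Import all_boot all_order all_algebra.
From mathcomp Require Import all_classical all_reals all_analysis.
Set Implicit Arguments. Unset Strict Implicit. Unset Printing Implicit Defensive.
Import Order.TTheory GRing.Theory Num.Theory.
Local Open Scope classical_set_scope.
Local Open Scope ring_scope.

(* The innovation eps_1 is a real random variable [eps] on a probability
   space (T, P).  Only its law matters for the statement. *)

Definition A1 {R : realType} {d : measure_display} {T : measurableType d}
  (P : probability T R) (eps : T -> R) : Prop :=
  exists f : R -> R,
    measurable_fun setT f /\ (forall x, 0 <= f x) /\
    (forall A : set R, measurable A ->
       P (eps @^-1` A) = (\int[lebesgue_measure]_(x in A) (f x)%:E)%E) /\
    (forall K : R, 0 < K -> exists m M : R, 0 < m /\ m <= M /\
       forall x, `|x| <= K -> m <= f x /\ f x <= M).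

Definition A2 {R : realType} (mu sigma : R -> R) : Prop :=
  (forall K : R, 0 < K -> exists M : R, forall x, `|x| <= K -> `|mu x| <= M) /\
  (forall x, 0 < sigma x) /\
  (forall K : R, 0 < K -> exists m : R, 0 < m /\ forall x, `|x| <= K -> m <= sigma x) /\
  (exists M : R, forall x, sigma x <= M).

(* (A3): limsup_{|x|->oo} |x + mu x| / |x| < 1, written out. *)
Definition A3 {R : realType} (mu : R -> R) : Prop :=
  exists lam : R, lam < 1 /\ exists R0 : R, 0 < R0 /\
    forall x, R0 <= `|x| -> `|x + mu x| / `|x| <= lam.

Definition A4 {R : realType} {d : measure_display} {T : measurableType d}
  (P : probability T R) (eps : T -> R) : Prop :=
  (exists kappa : R, 0 < kappa /\
     (\int[P]_w (expR (kappa * eps w ^+ 2))%:E < +oo)%E) /\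
  P.-integrable setT (fun w => (eps w)%:E) /\
  (\int[P]_w (eps w)%:E = 0)%E.

Definition PexpV {R : realType} {d : measure_display} {T : measurableType d}
  (P : probability T R) (eps : T -> R) (mu sigma V : R -> R) (x : R) : \bar R :=
  (\int[P]_w (expR (V (x + mu x + sigma x * eps w)))%:E)%E.

From HB Require Import structures.
From mathcomp Require Import all_boot all_order all_algebra.
From mathcomp Require Import all_classical all_reals all_analysis.
From mathcomp Require Import measurable_realfun ring lra.
Set Implicit Arguments.
Unset Strict Implicit.
Unset Printing Implicit Defensive.
Import Order.TTheory GRing.Theory Num.Theory.
Local Open Scope classical_set_scope.
Local Open Scope ring_scope.

(* Write m = x + mu x and s = sigma x <= Ms.  For 0 < t < 1 the convexity bound
   (m + s e)^2 <= m^2 / t + (s e)^2 / (1 - t) gives, with q = kappa (1 - t) / Ms^2,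
   V(m + s e) <= 1 + q m^2 / t + kappa e^2, hence
   log P e^V (x) <= 1 + q m^2 / t + log E exp(kappa eps^2).
   By (A3), m^2 <= r x^2 with r < 1 for large |x|; choosing t in (r, 1) makes
   log P e^V - V <= -(1 - r/t) q x^2 + const, which is below -delta V off a
   large interval [-K, K], while on [-K, K] everything is bounded because mu is
   locally bounded. *)

Lemma sqrrD_le_convex (R : realFieldType) (u v t : R) : 0 < t < 1 ->
  (u + v) ^+ 2 <= u ^+ 2 / t + v ^+ 2 / (1 - t).
Proof.
case/andP => t0 t1; have t1' : 0 < 1 - t by rewrite subr_gt0.
rewrite -subr_ge0.
have -> : u ^+ 2 / t + v ^+ 2 / (1 - t) - (u + v) ^+ 2 =
    ((1 - t) * u - t * v) ^+ 2 / (t * (1 - t)).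
  by field; rewrite ?gt_eqF ?mulr_gt0.
by rewrite divr_ge0 ?sqr_ge0 // ltW // mulr_gt0.
Qed.

Lemma quadratic_shift_le (R : realFieldType) (q kappa t m s e : R) :
  0 <= q -> 0 < t < 1 -> q * s ^+ 2 <= kappa * (1 - t) ->
  q * (m + s * e) ^+ 2 <= q * (m ^+ 2 / t) + kappa * e ^+ 2.
Proof.
move=> q0 /[dup] t01 /andP[t0 t1] qs; have t1' : 0 < 1 - t by rewrite subr_gt0.
have qs' : q * s ^+ 2 / (1 - t) <= kappa by rewrite ler_pdivrMr.
apply: le_trans (ler_wpM2l q0 (sqrrD_le_convex m (s * e) t01)) _.
rewrite mulrDr lerD2l.
have -> : q * ((s * e) ^+ 2 / (1 - t)) = q * s ^+ 2 / (1 - t) * e ^+ 2 by ring.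
by rewrite ler_wpM2r ?sqr_ge0.
Qed.

Lemma A3_sqr_contraction (R : realType) (mu : R -> R) : A3 mu ->
  exists r R0 : R, 0 <= r < 1 /\
    forall x, R0 <= `|x| -> (x + mu x) ^+ 2 <= r * x ^+ 2.
Proof.
move=> [lam [lam1 [R0 [R00 HA3]]]].
pose l := Num.max lam 0.
have l0 : 0 <= l by rewrite le_max lexx orbT.
have l1 : l < 1 by rewrite gt_max lam1 ltr01.
exists (l ^+ 2), R0; split.
  by rewrite sqr_ge0 /= expr2; nra.
move=> x xR0; have x0 : 0 < `|x| by apply: lt_le_trans xR0.
have : `|x + mu x| <= l * `|x|.
  apply: (@le_trans _ _ (lam * `|x|)); first by rewrite -ler_pdivrMr // HA3.
  by rewrite ler_pM2r // le_max lexx.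
rewrite -(real_normK (num_real (x + mu x))) -(real_normK (num_real x)) -exprMn => h.
by rewrite ler_sqr ?nnegrE ?mulr_ge0.
Qed.

Definition locally_bounded (R : numDomainType) (f : R -> R) :=
  forall K, 0 < K -> exists M, forall x, `|x| <= K -> `|f x| <= M.

Lemma locally_bounded_sqr_shift (R : realFieldType) (mu : R -> R) (t : R) :
  0 < t -> locally_bounded mu -> locally_bounded (fun x => (x + mu x) ^+ 2 / t).
Proof.
move=> t0 mu_bd K K0; have [M HM] := mu_bd K K0; exists ((K + M) ^+ 2 / t) => x xK.
have xm : `|x + mu x| <= K + M.
  by apply: (le_trans (ler_normD _ _)); apply: lerD => //; exact: HM.
rewrite normrM normrV ?unitfE ?gt_eqF // (gtr0_norm t0) ler_pM2r ?invr_gt0 //.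
by rewrite normrX ler_sqr ?nnegrE // (le_trans (normr_ge0 _) xm).
Qed.

Lemma quadratic_drift (R : realFieldType) (f n : R -> R) (q L rho R0 : R) :
  0 < q -> rho < 1 ->
  locally_bounded n ->
  (forall x, R0 <= `|x| -> n x <= rho * x ^+ 2) ->
  (forall x, f x <= q * n x + L) ->
  exists K delta b : R, 0 < K /\ 0 < delta /\ 0 < b /\
    forall x, f x - (1 + q * x ^+ 2)
                <= - delta * (1 + q * x ^+ 2) + b * \1_(`[-K, K]) x.
Proof.
move=> q0 rho1 n_bd n_out f_le.
pose g := 1 - rho; have g0 : 0 < g by rewrite subr_gt0.
(* Off [-K, K] we have (2 L + g) / (q g) <= |x| <= x^2, so the gain g q x^2 beats L. *)
pose K := Num.max 1 (Num.max R0 ((2 * L + g) / (q * g))).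
have K1 : 1 <= K by rewrite le_max lexx.
have [M HM] := n_bd K (lt_le_trans ltr01 K1).
pose delta := g / 2; have delta0 : 0 < delta by rewrite divr_gt0.
pose b := Num.max 1 (q * M + L + delta * (1 + q * K ^+ 2)).
exists K, delta, b; split; first exact: lt_le_trans K1.
split=> //; split; first by rewrite lt_max ltr01.
move=> x; rewrite indicE mem_setE in_itv /= -ler_norml.
have qx0 : 0 <= q * x ^+ 2 by rewrite mulr_ge0 ?sqr_ge0 ?ltW.
have f_n := f_le x.
case: (leP `|x| K) => [xK | Kx]; rewrite /= ?(mulr1, mulr0, addr0).
- have bM : q * M + L + delta * (1 + q * K ^+ 2) <= b by rewrite le_max lexx orbT.
  have qn : q * n x <= q * M by rewrite ler_pM2l // (le_trans (ler_norm _)) ?HM.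
  have xK2 : x ^+ 2 <= K ^+ 2.
    by rewrite -(real_normK (num_real x)) ler_sqr ?nnegrE ?(le_trans ler01 K1).
  have dqx : delta * (1 + q * x ^+ 2) <= delta * (1 + q * K ^+ 2).
    by rewrite ler_pM2l // lerD2l ler_pM2l.
  lra.
- have x1 : 1 < `|x| by apply: le_lt_trans Kx.
  have KR0 : R0 <= K by rewrite !le_max lexx orbT.
  have KL : (2 * L + g) / (q * g) <= K by rewrite !le_max lexx !orbT.
  have Rx : R0 <= `|x| := le_trans KR0 (ltW Kx).
  have qn : q * n x <= q * (rho * x ^+ 2) by rewrite ler_pM2l // n_out.
  have Lx : (2 * L + g) / (q * g) <= x ^+ 2.
    rewrite -(real_normK (num_real x)) expr2.
    apply: (le_trans (y := `|x|)); last by rewrite ler_peMr // ltW.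
    exact: le_trans KL (ltW Kx).
  rewrite ler_pdivrMr ?mulr_gt0 // in Lx.
  have rho_g : q * (rho * x ^+ 2) = q * x ^+ 2 - q * g * x ^+ 2 by rewrite /g; ring.
  rewrite rho_g in qn.
  have -> : - delta * (1 + q * x ^+ 2) = - (g / 2) - q * g * x ^+ 2 / 2.
    by rewrite /delta; ring.
  lra.
Qed.

Section exponential_moments.
Context (R : realType) (d : measure_display) (T : measurableType d).
Variables (P : probability T R) (eps : T -> R).
Hypothesis meps : measurable_fun setT eps.

Lemma measurable_expR_comp (h : R -> R) : measurable_fun setT h ->
  measurable_fun setT (fun w => (expR (h (eps w)))%:E).
Proof.
move=> mh; apply/measurable_EFinP.
by apply: measurableT_comp; [exact: measurable_expR | exact: measurableT_comp].
Qed.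

Lemma integral_expR_ge1 (h : R -> R) : measurable_fun setT h ->
  (forall e, 0 <= h e) -> (1 <= \int[P]_w (expR (h (eps w)))%:E)%E.
Proof.
move=> mh h0; rewrite -[X in (X <= _)%E](probability_setT P) -[P _]mul1e.
rewrite -integral_cst //; apply: ge0_le_integral => //.
- exact: measurable_expR_comp.
- by move=> w _; rewrite lee_fin -expR0 ler_expR.
Qed.

Lemma integral_expR_le (h : R -> R) (a kappa : R) : measurable_fun setT h ->
  (forall e, h e <= a + kappa * e ^+ 2) ->
  (\int[P]_w (expR (h (eps w)))%:E
     <= (expR a)%:E * \int[P]_w (expR (kappa * eps w ^+ 2))%:E)%E.
Proof.
move=> mh h_le; have mk : measurable_fun setT (fun e : R => kappa * e ^+ 2).
  by apply: measurable_funM => //; exact: measurable_funX.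
rewrite -ge0_integralZl_EFin //; last exact: measurable_expR_comp mk.
apply: ge0_le_integral => //.
- exact: measurable_expR_comp.
- by apply: emeasurable_funM => //; exact: measurable_expR_comp mk.
- by move=> w _; rewrite -EFinM lee_fin -expRD ler_expR.
Qed.

Lemma ln_integral_expR_le (h : R -> R) (a kappa : R) :
  measurable_fun setT h -> (forall e, 0 <= h e) -> 0 <= kappa ->
  (forall e, h e <= a + kappa * e ^+ 2) ->
  (\int[P]_w (expR (kappa * eps w ^+ 2))%:E < +oo)%E ->
  (\int[P]_w (expR (h (eps w)))%:E < +oo)%E /\
  ln (fine (\int[P]_w (expR (h (eps w)))%:E))
    <= a + ln (fine (\int[P]_w (expR (kappa * eps w ^+ 2))%:E)).
Proof.
move=> mh h0 k0 h_le Ifin.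
have mk : measurable_fun setT (fun e : R => kappa * e ^+ 2).
  by apply: measurable_funM => //; exact: measurable_funX.
have I1 := integral_expR_ge1 mk (fun e => mulr_ge0 k0 (sqr_ge0 e)).
have J1 := integral_expR_ge1 mh h0.
have J_le := integral_expR_le mh h_le.
move: I1 Ifin J1 J_le.
case: (\int[P]_w _)%E => [c| |] // c1 _.
case: (\int[P]_w _)%E => [p| |] //= p1; rewrite -EFinM !lee_fin in c1 p1 * => p_le.
rewrite ltry; split => //.
rewrite -[a in a + _]expRK -lnM ?posrE ?expR_gt0 ?(lt_le_trans ltr01) //.
by rewrite ler_ln ?posrE ?mulr_gt0 ?expR_gt0 ?(lt_le_trans ltr01).
Qed.

Lemma ln_integral_expR_quadratic_le (q kappa t m s : R) :
  0 <= q -> 0 <= kappa -> 0 < t < 1 -> q * s ^+ 2 <= kappa * (1 - t) ->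
  (\int[P]_w (expR (kappa * eps w ^+ 2))%:E < +oo)%E ->
  (\int[P]_w (expR (1 + q * (m + s * eps w) ^+ 2))%:E < +oo)%E /\
  ln (fine (\int[P]_w (expR (1 + q * (m + s * eps w) ^+ 2))%:E))
    <= 1 + q * (m ^+ 2 / t) + ln (fine (\int[P]_w (expR (kappa * eps w ^+ 2))%:E)).
Proof.
move=> q0 k0 t01 qs Ifin.
apply: (ln_integral_expR_le (h := fun e => 1 + q * (m + s * e) ^+ 2)) => //.
- apply: measurable_funD => //; apply: measurable_funM => //.
  by apply: measurable_funX; apply: measurable_funD.
- by move=> e; apply: addr_ge0 => //; exact: mulr_ge0 q0 (sqr_ge0 _).
- by move=> e; rewrite -[X in _ <= X]addrA lerD2l quadratic_shift_le.
Qed.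

End exponential_moments.

Theorem propositionp2p5 (R : realType) (d : measure_display) (T : measurableType d)
  (P : probability T R) (eps : T -> R) (mu sigma : R -> R) :
  measurable_fun setT eps ->
  measurable_fun setT mu -> measurable_fun setT sigma ->
  A1 P eps -> A2 mu sigma -> A3 mu -> A4 P eps ->
  exists q K delta b : R, 0 < q /\ 0 < K /\ 0 < delta /\ 0 < b /\
    let V := fun x : R => 1 + q * x ^+ 2 in
    let W := V in
    forall x : R,
      (PexpV P eps mu sigma V x < +oo)%E /\
      ln (fine (PexpV P eps mu sigma V x)) - V x
        <= - delta * W x + b * \1_(`[-K, K]) x.
Proof.
move=> meps _ _ _ [mu_bd [sigma_gt0 [_ [Ms sigma_le]]]].
move=> /A3_sqr_contraction[r [R0 [/andP[r0 r1] mu_contr]]] [[kappa [kappa0 Ifin]] _].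
pose t := (1 + r) / 2; have t0 : 0 < t by rewrite /t; lra.
have t01 : 0 < t < 1 by rewrite t0 /t; lra.
have Ms0 : 0 < Ms := lt_le_trans (sigma_gt0 0) (sigma_le 0).
pose q := kappa * (1 - t) / Ms ^+ 2.
have q0 : 0 < q by rewrite divr_gt0 ?mulr_gt0 ?exprn_gt0 // subr_gt0; case/andP: t01.
have q_sigma (x : R) : q * sigma x ^+ 2 <= kappa * (1 - t).
  rewrite (_ : kappa * _ = q * Ms ^+ 2); last by rewrite /q mulfVK ?gt_eqF ?exprn_gt0.
  by rewrite ler_pM2l // ler_sqr ?nnegrE ?sigma_le ?(ltW (sigma_gt0 x)) ?(ltW Ms0).
have PV (x : R) := ln_integral_expR_quadratic_le meps (x + mu x)
  (ltW q0) (ltW kappa0) t01 (q_sigma x) Ifin.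
have n_out (x : R) : R0 <= `|x| -> (x + mu x) ^+ 2 / t <= r / t * x ^+ 2.
  by move=> xR0; rewrite [r / t * _]mulrAC ler_pM2r ?invr_gt0 // mu_contr.
have rt1 : r / t < 1 by rewrite ltr_pdivrMr // mul1r /t; lra.
pose L := 1 + ln (fine (\int[P]_w (expR (kappa * eps w ^+ 2))%:E)%E).
pose V y := 1 + q * y ^+ 2.
have f_le (x : R) :
    ln (fine (PexpV P eps mu sigma V x)) <= q * ((x + mu x) ^+ 2 / t) + L.
  by have := (PV x).2; rewrite /L; lra.
have [K [delta [b [K0 [delta0 [b0 drift]]]]]] :=
  quadratic_drift q0 rt1 (locally_bounded_sqr_shift t0 mu_bd) n_out f_le.
exists q, K, delta, b; do 4!split => //.
by move=> V' W x; split; [exact: (PV x).1 | exact: drift].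
Qed.
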